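(* Let $q>0$ be a rational number. There exists a finitely presented group $G$ such that $RG(G)=q$.
   Context: For a group $A$, $d(A)$ is the minimal number of generators of $A$. The (absolute) rank gradient of a finitely generated group $G$ is $RG(G)=\inf_{K}\frac{d(K)-1}{[G:K]}$, the infimum over all finite index subgroups $K$ of $G$. *)

From mathcomp Require Import all_boot all_order all_algebra.
Set Implicit Arguments. Unset Strict Implicit. Unset Printing Implicit Defensive.
Import Order.TTheory GRing.Theory Num.Theory.

Record AbsGroup := {
  carrier :> Type;
  gmul : carrier -> carrier -> carrier;
  ginv : carrier -> carrier;
  gone : carrier;
  gmulA : forall x y z, gmul x (gmul y z) = gmul (gmul x y) z;
  gmul1g : forall x, gmul gone x = x;
  gmulg1 : forall x, gmul x gone = x;
  gmulVg : forall x, gmul (ginv x) x = gone;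
  gmulgV : forall x, gmul x (ginv x) = gone
}.

(* Words in n letters and their inverses: (i, false) = x_i, (i, true) = x_i^-1. *)
Definition word (n : nat) := seq ('I_n * bool).

Definition eval_word (G : AbsGroup) (n : nat) (f : 'I_n -> G) (w : word n) : G :=
  foldr (fun (l : 'I_n * bool) acc =>
           @gmul G (if l.2 then @ginv G (f l.1) else f l.1) acc) (@gone G) w.

Definition inv_letter (n : nat) (l : 'I_n * bool) : 'I_n * bool := (l.1, ~~ l.2).

(* The congruence on words defining the group < x_1..x_n | R >:
   generated by free cancellation and killing the relators. *)
Inductive pres_eq (n : nat) (R : seq (word n)) : word n -> word n -> Prop :=
  | pe_refl w : pres_eq R w w
  | pe_sym u v : pres_eq R u v -> pres_eq R v u
  | pe_trans u v w : pres_eq R u v -> pres_eq R v w -> pres_eq R u w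
  | pe_cat u u' v v' : pres_eq R u u' -> pres_eq R v v' ->
                       pres_eq R (u ++ v) (u' ++ v')
  | pe_cancel l : pres_eq R [:: l; inv_letter l] [::]
  | pe_rel r : r \in R -> pres_eq R r [::].

(* G is finitely presented: G is isomorphic to < x_1..x_n | R > with R finite,
   i.e. there is an assignment of generators that is onto and whose word
   kernel is exactly the congruence generated by R. *)
Definition finitely_presented (G : AbsGroup) : Prop :=
  exists (n : nat) (R : seq (word n)) (x : 'I_n -> G),
    (forall g : G, exists w : word n, eval_word x w = g) /\
    (forall u v : word n, eval_word x u = eval_word x v <-> pres_eq R u v).

Definition subgroup (G : AbsGroup) (K : G -> Prop) : Prop :=
  K (@gone G) /\ (forall x y, K x -> K y -> K (@gmul G x y)) /\
  (forall x, K x -> K (@ginv G x)).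

(* [G : K] = m : there are exactly m left cosets gK. *)
Definition has_index (G : AbsGroup) (K : G -> Prop) (m : nat) : Prop :=
  exists t : 'I_m -> G, forall g : G, exists! i : 'I_m, K (@gmul G (@ginv G (t i)) g).

Definition generated_by_k (G : AbsGroup) (K : G -> Prop) (k : nat) : Prop :=
  exists s : 'I_k -> G, (forall i, K (s i)) /\
    (forall g : G, K g -> exists w : word k, eval_word s w = g).

Definition min_gens (G : AbsGroup) (K : G -> Prop) (k : nat) : Prop :=
  generated_by_k K k /\ forall j, generated_by_k K j -> (k <= j)%N.

Local Open Scope ring_scope.

(* RG(G) = r : r is the infimum of (d(K)-1)/[G:K] over finite index subgroups K. *)
Definition rank_gradient_is (G : AbsGroup) (r : rat) : Prop :=
  (forall (K : G -> Prop) (m k : nat), subgroup K -> has_index K m -> min_gens K k ->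
      r <= (k%:Q - 1) / m%:Q) /\
  (forall eps : rat, 0 < eps -> exists (K : G -> Prop) (m k : nat),
      [/\ subgroup K, has_index K m, min_gens K k & (k%:Q - 1) / m%:Q < r + eps]).

From mathcomp Require Import all_boot all_order all_algebra.
From mathcomp Require Import zify.
From Stdlib Require Import IndefiniteDescription.
Set Implicit Arguments. Unset Strict Implicit. Unset Printing Implicit Defensive.
Import Order.TTheory GRing.Theory Num.Theory.

(* Write q = a/b and take G = F_(a+1) x Z/b, presented by
   < x_1, ..., x_(a+1), y | y^b, [x_j, y] >.  The subgroup F_(a+1) x 1 has
   index b and needs a+1 generators, so RG(G) <= a/b.  Conversely let K have
   index m and be generated by k elements, and let n be the index of the
   image H of K in the free factor; then m <= n b.  H is generated by the k
   images, so by the Schreier bound k >= n a + 1: over F_2, the cycle space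
   of the Schreier graph of H (connected, n vertices, n (a+1) edges) has
   dimension n a + 1 and is spanned by the loops read off the generators.
   Hence (k - 1)/m >= a/b. *)

Section FreeReduction.
Variable r : nat.
Local Notation letter := ('I_r * bool)%type.

Lemma inv_letterK : involutive (@inv_letter r).
Proof. by case=> i b; rewrite /inv_letter /= negbK. Qed.

Definition red_cons (l : letter) (s : word r) : word r :=
  if s is l' :: t then (if l' == inv_letter l then t else l :: s) else [:: l].

Fixpoint reduced (s : word r) : bool :=
  if s is l :: t then
    (if t is l' :: _ then l' != inv_letter l else true) && reduced t
  else true.

Definition red (s : word r) : word r := foldr red_cons [::] s.

Lemma reduced_red_cons l s : reduced s -> reduced (red_cons l s).
Proof.
case: s => [|l' t] //= /andP[Ht Hr].
by case: eqP => [_|/eqP Hne] //=; rewrite Hne Ht Hr.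
Qed.

Lemma reduced_red s : reduced (red s).
Proof. by elim: s => [|l s IH] //=; apply: reduced_red_cons. Qed.

Lemma red_consK l s : reduced s -> red_cons (inv_letter l) (red_cons l s) = s.
Proof.
case: s => [|l' t] /=; first by rewrite inv_letterK eqxx.
move=> /andP[Ht _]; have [E|_] := eqVneq l' (inv_letter l) => /=.
  by subst l'; case: t Ht => [|l'' t'] //= /negbTE ->.
by rewrite inv_letterK eqxx.
Qed.

Lemma red_cons_id l s : reduced (l :: s) -> red_cons l s = l :: s.
Proof. by case: s => [|l' t] //= /andP[Hl _]; case: eqP Hl => // ->; rewrite eqxx. Qed.

Lemma red_id s : reduced s -> red s = s.
Proof.
elim: s => [|l s IH] // Hs /=.
by rewrite IH ?red_cons_id //; case/andP: Hs.
Qed.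

Lemma reduced_foldr_red_cons s t : reduced s -> reduced (foldr red_cons s t).
Proof. by move=> Hs; elim: t => //= l t IH; apply: reduced_red_cons. Qed.

Lemma foldr_red_cons_red s t : reduced s -> foldr red_cons s (red t) = foldr red_cons s t.
Proof.
move=> Hs; elim: t => [|l t IH] //=; rewrite -IH.
case: (red t) (reduced_red t) => [|l' t'] //= Ht.
have [E|] := eqVneq l' (inv_letter l) => //=; subst l'.
by rewrite -{1}(inv_letterK l) red_consK // reduced_foldr_red_cons.
Qed.

Lemma red_cat u v : red (u ++ v) = foldr red_cons (red v) u.
Proof. by rewrite /red foldr_cat. Qed.

Lemma red_redl u v : red (red u ++ v) = red (u ++ v).
Proof. by rewrite !red_cat foldr_red_cons_red // reduced_red. Qed.

Lemma red_redr u v : red (u ++ red v) = red (u ++ v).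
Proof. by rewrite !red_cat red_id // reduced_red. Qed.

Lemma red_cancel u l v : red (u ++ [:: inv_letter l, l & v]) = red (u ++ v).
Proof. by rewrite !red_cat /= red_consK // reduced_red. Qed.

Definition invw (w : word r) : word r := rev (map (@inv_letter r) w).

Lemma invw_cons l w : invw (l :: w) = invw w ++ [:: inv_letter l].
Proof. by rewrite /invw /= rev_cons cats1. Qed.

Lemma invwK : involutive invw.
Proof.
elim=> [|l w IH] //; rewrite invw_cons /invw map_cat rev_cat /=.
by rewrite inv_letterK; congr (_ :: _); apply: IH.
Qed.

Lemma red_invl w : red (invw w ++ w) = [::].
Proof. by elim: w => [|l w IH] //; rewrite invw_cons -catA /= red_cancel. Qed.

Lemma red_invr w : red (w ++ invw w) = [::].
Proof. by rewrite -{1}(invwK w) red_invl. Qed.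

End FreeReduction.

Lemma addmx_F2 m1 m2 (A : 'M['F_2]_(m1, m2)) : (A + A = 0)%R.
Proof. by apply/matrixP=> i j; rewrite !mxE addrr_pchar2 // pchar_Fp. Qed.

Section SchreierGraph.
Local Open Scope ring_scope.
Variables (n r : nat).
Local Notation letter := ('I_r * bool)%type.
Variable step : letter -> 'I_n -> 'I_n.
Hypothesis stepK : forall l v, step (inv_letter l) (step l v) = v.

Lemma stepVK l v : step l (step (inv_letter l) v) = v.
Proof. by rewrite -{1}(inv_letterK l) stepK. Qed.

Definition walk (w : word r) (v : 'I_n) : 'I_n := foldr step v w.

Lemma walk_cat u w v : walk (u ++ w) v = walk u (walk w v).
Proof. by rewrite /walk foldr_cat. Qed.

Lemma walk_invw w v : walk (invw w) (walk w v) = v.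
Proof. by elim: w v => [|l w IH] v //=; rewrite invw_cons walk_cat /= stepK IH. Qed.

Lemma walk_red_cons l s v : walk (red_cons l s) v = walk (l :: s) v.
Proof.
by case: s => [|l' t] //=; case: eqP => [->|] //=; rewrite stepVK.
Qed.

Lemma walk_red w v : walk (red w) v = walk w v.
Proof. by elim: w => [|l w IH] //=; rewrite walk_red_cons /= IH. Qed.

(* Edges are indexed by their source and their (positive) label, so the
   letter [l] read at [u] traverses the edge of index [edge l u]. *)
Definition edge (l : letter) (u : 'I_n) : 'I_(n * r) :=
  mxvec_index (if l.2 then step l u else u) l.1.

Lemma edge_inv l u : edge (inv_letter l) (step l u) = edge l u.
Proof. by case: l => j [] //; rewrite /edge /= stepK. Qed.

Fixpoint chain (w : word r) (v : 'I_n) : 'rV['F_2]_(n * r) :=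
  if w is l :: w' then chain w' v + delta_mx 0 (edge l (walk w' v)) else 0.

Lemma chain_cat u w v : chain (u ++ w) v = chain u (walk w v) + chain w v.
Proof.
elim: u => [|l u IH] /=; first by rewrite add0r.
by rewrite IH walk_cat addrAC.
Qed.

Lemma chain_invw w v : chain (invw w) (walk w v) = chain w v.
Proof.
elim: w v => [|l w IH] v //=.
by rewrite invw_cons chain_cat /= add0r stepK IH edge_inv.
Qed.

Lemma chain_red_cons l s v : chain (red_cons l s) v = chain (l :: s) v.
Proof.
case: s => [|l' t] //=; case: eqP => [->|] //=.
have := edge_inv (inv_letter l) (walk t v); rewrite inv_letterK => ->.
by rewrite -addrA addmx_F2 addr0.
Qed.

Lemma chain_red w v : chain (red w) v = chain w v.
Proof. by elim: w => [|l w IH] //=; rewrite chain_red_cons /= IH walk_red. Qed.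

Definition edge_ends (e : 'I_(n * r)) : 'I_n * 'I_r :=
  enum_val (cast_ord (esym (mxvec_cast n r)) e).

Lemma edge_ends_index u j : edge_ends (mxvec_index u j) = (u, j).
Proof. by rewrite /edge_ends /mxvec_index cast_ordK enum_rankK. Qed.

Definition incidence_mx : 'M['F_2]_(n * r, n) :=
  \matrix_e ('e_(edge_ends e).1 + 'e_(step ((edge_ends e).2, false) (edge_ends e).1)).

Lemma row_incidence_mx u j :
  row (mxvec_index u j) incidence_mx = 'e_u + 'e_(step (j, false) u).
Proof. by rewrite rowK edge_ends_index. Qed.

Lemma incidence_mx_const : incidence_mx *m (const_mx 1 : 'cV_n) = 0.
Proof.
apply/row_matrixP => e; case/mxvec_indexP: e => u j.
rewrite row_mul row_incidence_mx row0 mulmxDl -!rowE.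
by apply/matrixP => a b; rewrite !mxE addrr_pchar2 // pchar_Fp.
Qed.

Lemma rank_incidence_mx (v0 : 'I_n) : (\rank incidence_mx + 1 <= n)%N.
Proof.
set c : 'cV['F_2]_n := const_mx 1.
have c_ker : (c^T <= kermx incidence_mx^T)%MS.
  by rewrite sub_kermx -trmx_mul incidence_mx_const trmx0.
have c_neq0 : c^T != 0.
  by apply/eqP => /matrixP /(_ 0 v0); rewrite !mxE => /eqP; rewrite oner_eq0.
have := mxrankS c_ker; rewrite rank_rV c_neq0 mxrank_ker mxrank_tr.
have := rank_leq_col incidence_mx; lia.
Qed.

Variable k : nat.
Variable S : 'I_k -> word r.

Definition expand (u : word k) : word r :=
  flatten [seq (if l.2 then invw (S l.1) else S l.1) | l <- u].

Variable v0 : 'I_n.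
Hypothesis reach : forall v, exists w : word r, walk w v0 = v.
Hypothesis S_loop : forall i, walk (S i) v0 = v0.
Hypothesis S_gen : forall w, walk w v0 = v0 -> exists u : word k, red w = red (expand u).

Definition loops_mx : 'M['F_2]_(k, n * r) := \matrix_i chain (S i) v0.

Lemma expand_loop u : walk (expand u) v0 = v0 /\ (chain (expand u) v0 <= loops_mx)%MS.
Proof.
have Si i : (chain (S i) v0 <= loops_mx)%MS.
  by rewrite -(rowK (fun i => chain (S i) v0)) row_sub.
elim: u => [|[i b] u [IH1 IH2]] /=; first by rewrite sub0mx.
rewrite walk_cat chain_cat IH1; case: b => /=.
  by rewrite -{1 3}(S_loop i) walk_invw chain_invw addmx_sub.
by rewrite S_loop addmx_sub.
Qed.

Lemma loop_chain_sub w : walk w v0 = v0 -> (chain w v0 <= loops_mx)%MS.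
Proof.
move=> /S_gen [u Hu]; rewrite -chain_red Hu chain_red.
by case: (expand_loop u).
Qed.

Definition path_to (v : 'I_n) : word r :=
  xchoose (let: ex_intro w Hw := reach v in ex_intro _ w (introT eqP Hw)).

Lemma walk_path_to v : walk (path_to v) v0 = v.
Proof. exact/eqP/(xchooseP (P := fun w => walk w v0 == v)). Qed.

Lemma walk_invw_path_to v : walk (invw (path_to v)) v = v0.
Proof. by rewrite -{2}(walk_path_to v) walk_invw. Qed.

Lemma chain_invw_path_to v : chain (invw (path_to v)) v = chain (path_to v) v0.
Proof. by rewrite -{2}(walk_path_to v) chain_invw. Qed.

Definition paths_mx : 'M['F_2]_(n, n * r) := \matrix_v chain (path_to v) v0.

(* Closing each edge by the tree paths to its ends gives a loop at [v0]. *)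
Lemma edge_cycle_sub e :
  ((delta_mx 0 e + row e incidence_mx *m paths_mx)%R <= loops_mx)%MS.
Proof.
case/mxvec_indexP: e => u j.
rewrite row_incidence_mx mulmxDl -!rowE !rowK.
pose L := invw (path_to (step (j, false) u)) ++ (j, false) :: path_to u.
have HL : walk L v0 = v0 by rewrite walk_cat /= walk_path_to walk_invw_path_to.
have := loop_chain_sub HL; rewrite chain_cat /= walk_path_to chain_invw_path_to.
have -> : edge (j, false) u = mxvec_index u j by [].
by rewrite addrCA [X in _ -> (X <= _)%MS]addrC -addrA.
Qed.

Lemma cycles_sub_loops : (kermx incidence_mx <= loops_mx)%MS.
Proof.
apply/row_subP => i; set z := row i (kermx incidence_mx).
have Hz : z *m incidence_mx = 0 by rewrite /z -row_mul mulmx_ker row0.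
suff -> : z = \sum_e z 0 e *: ('e_e + row e incidence_mx *m paths_mx).
  by apply: summx_sub => e _; apply: scalemx_sub; exact: edge_cycle_sub.
under eq_bigr do rewrite scalerDr.
rewrite big_split /= -row_sum_delta.
have -> : \sum_e z 0 e *: (row e incidence_mx *m paths_mx) = z *m incidence_mx *m paths_mx.
  by rewrite [z *m _]mulmx_sum_row mulmx_suml; apply: eq_bigr => e _; rewrite scalemxAl.
by rewrite Hz mul0mx addr0.
Qed.

Lemma schreier_bound : (n * r + 1 <= k + n)%N.
Proof.
have := mxrankS cycles_sub_loops; rewrite mxrank_ker.
have := rank_leq_row loops_mx; have := rank_incidence_mx v0.
have := rank_leq_row incidence_mx; lia.
Qed.

End SchreierGraph.

Section AbsGroupTheory.
Variable G : AbsGroup.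
Local Notation "x * y" := (@gmul G x y).
Local Notation "x ^-1" := (@ginv G x).
Local Notation "1" := (@gone G).

Lemma gmulKg (x y : G) : x^-1 * (x * y) = y.
Proof. by rewrite gmulA gmulVg gmul1g. Qed.

Lemma gmulKVg (x y : G) : x * (x^-1 * y) = y.
Proof. by rewrite gmulA gmulgV gmul1g. Qed.

Lemma ginv_unique (x y : G) : x * y = 1 -> y = x^-1.
Proof. by move=> H; rewrite -(gmulg1 x^-1) -H gmulKg. Qed.

Lemma ginvK (x : G) : (x^-1)^-1 = x.
Proof. by symmetry; apply: ginv_unique; rewrite gmulVg. Qed.

Lemma ginvM (x y : G) : (x * y)^-1 = y^-1 * x^-1.
Proof. by symmetry; apply: ginv_unique; rewrite -gmulA (gmulA y) gmulgV gmul1g gmulgV. Qed.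

Lemma ginv1 : (1 : G)^-1 = 1.
Proof. by rewrite -{2}(gmulVg 1) gmulg1. Qed.

Lemma eval_word_cat n (f : 'I_n -> G) u v :
  eval_word f (u ++ v) = eval_word f u * eval_word f v.
Proof. by elim: u => [|l u IH] /=; rewrite ?gmul1g // IH gmulA. Qed.

End AbsGroupTheory.

Section FreeGroup.
Variable r : nat.

Definition rword := {w : word r | reduced w}.
Definition rword_of (s : word r) : rword := exist _ (red s) (reduced_red s).
Definition rword_mul (a b : rword) : rword := rword_of (val a ++ val b).
Definition rword_inv (a : rword) : rword := rword_of (invw (val a)).
Definition rword_one : rword := exist _ [::] isT.

Lemma rword_ofK (a : rword) : rword_of (val a) = a.
Proof. by apply: val_inj; rewrite /= red_id //; case: a. Qed.

Lemma rword_mulA a b c : rword_mul a (rword_mul b c) = rword_mul (rword_mul a b) c.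
Proof. by apply: val_inj; rewrite /= red_redl red_redr catA. Qed.

Lemma rword_mul1 a : rword_mul rword_one a = a.
Proof. exact: rword_ofK. Qed.

Lemma rword_mulr1 a : rword_mul a rword_one = a.
Proof. by rewrite /rword_mul cats0 rword_ofK. Qed.

Lemma rword_mulV a : rword_mul (rword_inv a) a = rword_one.
Proof. by apply: val_inj; rewrite /= red_redl red_invl. Qed.

Lemma rword_mulrV a : rword_mul a (rword_inv a) = rword_one.
Proof. by apply: val_inj; rewrite /= red_redr red_invr. Qed.

End FreeGroup.

Section FreeTimesCyclic.
Variables (r b' : nat).

Definition fzp := (rword r * 'I_b'.+1)%type.
Definition fzp_mul (x y : fzp) : fzp := (rword_mul x.1 y.1, (x.2 + y.2)%R).
Definition fzp_inv (x : fzp) : fzp := (rword_inv x.1, (- x.2)%R).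
Definition fzp_one : fzp := (rword_one r, 0%R).

Lemma fzp_mulA x y z : fzp_mul x (fzp_mul y z) = fzp_mul (fzp_mul x y) z.
Proof. by rewrite /fzp_mul /= rword_mulA addrA. Qed.

Lemma fzp_mul1 x : fzp_mul fzp_one x = x.
Proof. by case: x => a c; rewrite /fzp_mul /= rword_mul1 add0r. Qed.

Lemma fzp_mulr1 x : fzp_mul x fzp_one = x.
Proof. by case: x => a c; rewrite /fzp_mul /= rword_mulr1 addr0. Qed.

Lemma fzp_mulV x : fzp_mul (fzp_inv x) x = fzp_one.
Proof. by case: x => a c; rewrite /fzp_mul /= rword_mulV addNr. Qed.

Lemma fzp_mulrV x : fzp_mul x (fzp_inv x) = fzp_one.
Proof. by case: x => a c; rewrite /fzp_mul /= rword_mulrV addrN. Qed.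

Definition free_times_Zp : AbsGroup :=
  Build_AbsGroup fzp_mulA fzp_mul1 fzp_mulr1 fzp_mulV fzp_mulrV.

End FreeTimesCyclic.

Section CosetFibres.
Variables (r b' m k : nat).
Local Notation G := (free_times_Zp r b').
Variable K : G -> Prop.
Hypothesis K_sub : subgroup K.
Variable t : 'I_m -> G.
Hypothesis t_transversal : forall g : G, exists! i : 'I_m, K (gmul (ginv (t i)) g).
Variable s : 'I_k -> G.
Hypothesis s_in : forall i, K (s i).
Hypothesis s_gen : forall g : G, K g -> exists w : word k, eval_word s w = g.

Let K1 : K (@gone G).
Proof. by case: K_sub. Qed.
Let KM (x y : G) : K x -> K y -> K (gmul x y).
Proof. by case: K_sub => _ [H _]; apply: H. Qed.
Let KV (x : G) : K x -> K (ginv x).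
Proof. by case: K_sub => _ [_ H]; apply: H. Qed.

Definition coset_idx (g : G) : 'I_m :=
  proj1_sig (constructive_indefinite_description _
    (let: ex_intro i (conj H _) := t_transversal g in ex_intro _ i H)).

Lemma coset_idxP g : K (gmul (ginv (t (coset_idx g))) g).
Proof. by rewrite /coset_idx; case: constructive_indefinite_description. Qed.

Lemma coset_idx_unique g i : K (gmul (ginv (t i)) g) -> coset_idx g = i.
Proof.
move=> Hi; have [j [_ U]] := t_transversal g.
by rewrite -(U _ Hi) (U _ (coset_idxP g)).
Qed.

Lemma coset_idx_eq g h : K (gmul (ginv g) h) -> coset_idx h = coset_idx g.
Proof.
move=> H; apply: coset_idx_unique.
by have := KM (coset_idxP g) H; rewrite -gmulA gmulKVg.
Qed.

Lemma coset_idx_eqK g h : coset_idx g = coset_idx h -> K (gmul (ginv g) h).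
Proof.
move=> E; have := KM (KV (coset_idxP g)) (coset_idxP h).
by rewrite E ginvM ginvK -gmulA gmulKVg.
Qed.

Lemma coset_idx_t i : coset_idx (t i) = i.
Proof. by apply: coset_idx_unique; rewrite gmulVg. Qed.

Lemma coset_idx_mull x g h :
  coset_idx g = coset_idx h -> coset_idx (gmul x g) = coset_idx (gmul x h).
Proof.
move=> E; apply: coset_idx_eq; rewrite ginvM -gmulA gmulKg.
exact: coset_idx_eqK.
Qed.

(* Since Z/b is central, the cosets met by [{w} x Z/b] form a block depending
   only on the coset of the image of K in the free factor. *)
Definition fibre (w : rword r) : {set 'I_m} := [set coset_idx ((w, d) : G) | d : 'I_b'.+1].

Lemma coset_idx_shift x y d e f : coset_idx ((x, d) : G) = coset_idx ((y, e) : G) ->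
  coset_idx ((x, d + f)%R : G) = coset_idx ((y, e + f)%R : G).
Proof.
move=> /coset_idx_eqK H; symmetry; apply: coset_idx_eq.
suff -> : gmul (ginv ((x, d + f)%R : G)) ((y, e + f)%R : G) = gmul (ginv ((x, d) : G)) (y, e)
  by [].
by rewrite /= /fzp_mul /fzp_inv /= opprD addrACA addNr addr0.
Qed.

Lemma fibre_sub x y d e : coset_idx ((x, d) : G) = coset_idx ((y, e) : G) ->
  fibre x \subset fibre y.
Proof.
move=> E; apply/subsetP => j /imsetP [d' _ ->].
by have := coset_idx_shift (d' - d)%R E; rewrite addrC subrK => ->; apply: imset_f.
Qed.

Lemma fibre_eq x y d e : coset_idx ((x, d) : G) = coset_idx ((y, e) : G) -> fibre x = fibre y.
Proof. by move=> E; apply/eqP; rewrite eqEsubset (fibre_sub E) (fibre_sub (esym E)). Qed.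

Definition fibres : {set {set 'I_m}} := [set fibre (t i).1 | i : 'I_m].

Lemma fibre_in w : fibre w \in fibres.
Proof.
apply/imsetP; exists (coset_idx ((w, 0%R) : G)) => //.
apply: (@fibre_eq _ _ 0%R (t (coset_idx ((w, 0%R) : G))).2).
by rewrite -surjective_pairing coset_idx_t.
Qed.

Let fibre1_in := fibre_in (rword_one r).

Definition fibre_code w : 'I_#|fibres| := enum_rank_in fibre1_in (fibre w).

Lemma fibre_codeK w : enum_val (fibre_code w) = fibre w.
Proof. exact: enum_rankK_in (fibre_in w). Qed.

Lemma fibre_code_surj i : exists w, fibre_code w = i.
Proof.
have /imsetP [j _ E] := enum_valP i; exists (t j).1.
by rewrite /fibre_code -E enum_valK_in.
Qed.

Lemma fibre_code_inj x y : fibre_code x = fibre_code y -> fibre x = fibre y.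
Proof. by move=> E; rewrite -!fibre_codeK E. Qed.

Definition fibre_step l (X : {set 'I_m}) : {set 'I_m} :=
  [set coset_idx (gmul ((rword_of [:: l], 0%R) : G) (t j)) | j in X].

Lemma fibre_step_fibre l w : fibre_step l (fibre w) = fibre (rword_of (l :: val w)).
Proof.
rewrite /fibre_step /fibre -imset_comp; apply: eq_imset => d /=.
rewrite (@coset_idx_mull _ _ ((w, d) : G)) ?coset_idx_t //.
by congr coset_idx; rewrite /= /fzp_mul /= add0r.
Qed.

Definition fibre_act l (i : 'I_#|fibres|) : 'I_#|fibres| :=
  enum_rank_in fibre1_in (fibre_step l (enum_val i)).

Lemma fibre_act_code l w : fibre_act l (fibre_code w) = fibre_code (rword_of (l :: val w)).
Proof. by rewrite /fibre_act fibre_codeK fibre_step_fibre. Qed.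

Lemma fibre_actK l i : fibre_act (inv_letter l) (fibre_act l i) = i.
Proof.
have [w <-] := fibre_code_surj i; rewrite !fibre_act_code; congr fibre_code.
apply: val_inj => /=.
have := red_redr [:: inv_letter l] (l :: val w); rewrite /= => ->.
have := red_cancel [::] l (val w); rewrite /= => ->.
by rewrite red_id //; case: w.
Qed.

Lemma walk_fibre_act u w :
  walk fibre_act u (fibre_code w) = fibre_code (rword_of (u ++ val w)).
Proof.
elim: u => [|l u IH] /=; first by rewrite rword_ofK.
rewrite IH fibre_act_code; congr fibre_code; apply: val_inj => /=.
by have := red_redr [:: l] (u ++ val w); rewrite /=.
Qed.

Definition gen_word (i : 'I_k) : word r := val (s i).1.

Lemma eval_word_fst u : val (eval_word s u).1 = red (expand gen_word u).
Proof.
elim: u => [|[i []] u IH] //=; rewrite IH.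
  by rewrite red_redl red_redr.
by rewrite red_redr.
Qed.

Lemma fibres_schreier_bound : (#|fibres| * r + 1 <= k + #|fibres|)%N.
Proof.
apply: (@schreier_bound _ _ _ fibre_actK _ gen_word (fibre_code (rword_one r))).
- move=> v; have [w <-] := fibre_code_surj v; exists (val w).
  by rewrite walk_fibre_act cats0 rword_ofK.
- move=> i; rewrite walk_fibre_act cats0 rword_ofK /fibre_code; congr enum_rank_in.
  apply: (@fibre_eq _ _ (s i).2 0%R); rewrite -surjective_pairing.
  apply: coset_idx_eq; have -> : ((rword_one r, 0%R) : G) = @gone G by [].
  by rewrite ginv1 gmul1g.
- move=> w; rewrite walk_fibre_act cats0 => /fibre_code_inj E.
  have : coset_idx (@gone G) \in fibre (rword_of w) by rewrite E; apply: imset_f.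
  case/imsetP => d _ /coset_idx_eqK; rewrite ginv1 gmul1g => /s_gen [u Hu].
  by exists u; rewrite -eval_word_fst Hu.
Qed.

Lemma index_le_fibres : (m <= #|fibres| * b'.+1)%N.
Proof.
pose rep (i : 'I_#|fibres|) : rword r :=
  if [pick j | fibre (t j).1 == enum_val i] is Some j then (t j).1 else rword_one r.
have fibre_rep i : fibre (rep i) = enum_val i.
  rewrite /rep; case: pickP => [j /eqP // | H].
  by have /imsetP [j _ E] := enum_valP i; move: (H j); rewrite E eqxx.
pose f (p : 'I_#|fibres| * 'I_b'.+1) : 'I_m := coset_idx ((rep p.1, p.2) : G).
have f_onto : [set: 'I_m] \subset f @: setT.
  apply/subsetP => j _.
  have : j \in fibre (rep (fibre_code (t j).1)).
    rewrite fibre_rep fibre_codeK; apply/imsetP; exists (t j).2 => //.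
    by rewrite -surjective_pairing coset_idx_t.
  by case/imsetP => d _ ->; apply/imsetP; exists (fibre_code (t j).1, d).
have := subset_leq_card f_onto; rewrite cardsT card_ord => /leq_trans; apply.
by apply: leq_trans (leq_imset_card _ _) _; rewrite cardsT card_prod !card_ord.
Qed.

End CosetFibres.

Section PresEqContext.
Variables (n : nat) (R : seq (word n)).
Local Notation pe := (pres_eq R).

Lemma pe_cons l u v : pe u v -> pe (l :: u) (l :: v).
Proof. exact: (pe_cat (u := [:: l]) (pe_refl _ _)). Qed.

Lemma pe_ctx u a b v : pe a b -> pe (u ++ a ++ v) (u ++ b ++ v).
Proof. by move=> H; apply: pe_cat; [apply: pe_refl | apply: pe_cat => //; apply: pe_refl]. Qed.

Lemma pe_rel_ctx rel u v : rel \in R -> pe (u ++ rel ++ v) (u ++ v).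
Proof. by move/pe_rel/(pe_ctx u v). Qed.

Lemma pe_cancel_ctx u l v : pe (u ++ [:: l, inv_letter l & v]) (u ++ v).
Proof. exact: (pe_ctx u v (pe_cancel R l)). Qed.

Lemma pe_cancelV_ctx u l v : pe (u ++ [:: inv_letter l, l & v]) (u ++ v).
Proof. by have := pe_cancel_ctx u (inv_letter l) v; rewrite inv_letterK. Qed.

End PresEqContext.

Section Presentation.
Variables (r b' : nat).
Local Notation G := (free_times_Zp r b').
Local Notation b := b'.+1.
Local Notation letter := ('I_r.+1 * bool)%type.

Definition free_gen (j : 'I_r) : G := (rword_of [:: (j, false)], 0%R).

Lemma free_gen_letter j (bb : bool) :
  (if bb then ginv (free_gen j) else free_gen j) = ((rword_of [:: (j, bb)], 0%R) : G).
Proof. by case: bb => //; rewrite /= /fzp_inv oppr0; congr (_, _); apply: val_inj. Qed.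

Lemma eval_free_gen w : eval_word free_gen w = ((rword_of w, 0%R) : G).
Proof.
elim: w => [|[j bb] w IH]; first by congr (_, _); apply: val_inj.
rewrite /= IH free_gen_letter /= /fzp_mul addr0; congr (_, _); apply: val_inj.
by rewrite /rword_mul /= red_id // reduced_red.
Qed.

Definition zp_gen : G := (rword_one r, inZp 1).

Definition pres_gen (i : 'I_r.+1) : G :=
  if unlift ord_max i is Some j then free_gen j else zp_gen.

Definition y_letter : letter := (ord_max, false).
Definition x_letter (l : 'I_r * bool) : letter := (lift ord_max l.1, l.2).
Definition commutator_rel (j : 'I_r) : word r.+1 :=
  [:: x_letter (j, false); y_letter; x_letter (j, true); inv_letter y_letter].
Definition relators : seq (word r.+1) :=
  nseq b y_letter :: [seq commutator_rel j | j <- enum 'I_r].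
Local Notation pe := (pres_eq relators).

Lemma y_relator : nseq b y_letter \in relators.
Proof. by rewrite inE eqxx. Qed.

Lemma commutator_relator j : commutator_rel j \in relators.
Proof. by rewrite inE map_f ?orbT ?mem_enum. Qed.

Lemma pe_y_x l : pe [:: y_letter; x_letter l] [:: x_letter l; y_letter].
Proof.
have yx j : pe [:: y_letter; x_letter (j, false)] [:: x_letter (j, false); y_letter].
  set x := x_letter (j, false); set X := x_letter (j, true).
  apply: (pe_trans (pe_sym (pe_rel_ctx [::] [:: y_letter; x] (commutator_relator j)))).
  apply: (pe_trans (pe_cancelV_ctx _ [:: x; y_letter; X] y_letter [:: x])).
  exact: (pe_cancelV_ctx _ [:: x; y_letter] x [::]).
case: l => j []; last exact: yx.
set x := x_letter (j, false); set X := x_letter (j, true).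
apply: pe_sym; apply: (pe_trans (pe_sym (pe_cancel_ctx _ [:: X; y_letter] x [::]))).
apply: (pe_trans (pe_ctx [:: X] [:: X] (yx j))).
exact: (pe_cancelV_ctx _ [::] x [:: y_letter; X]).
Qed.

Lemma pe_y_xword w : pe (y_letter :: map x_letter w) (map x_letter w ++ [:: y_letter]).
Proof.
elim: w => [|l w IH] /=; first exact: pe_refl.
apply: (pe_trans (pe_ctx [::] (map x_letter w) (pe_y_x l))).
exact: pe_cons IH.
Qed.

Lemma pe_ys_xword d w :
  pe (nseq d y_letter ++ map x_letter w) (map x_letter w ++ nseq d y_letter).
Proof.
elim: d => [|d IH] /=; first by rewrite cats0; apply: pe_refl.
apply: (pe_trans (pe_cons y_letter IH)).
rewrite -cat1s -[_ :: nseq d y_letter]cat1s !catA.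
by apply: pe_cat; [apply: pe_y_xword | apply: pe_refl].
Qed.

Lemma pe_ys_mod c : pe (nseq c y_letter) (nseq (c %% b) y_letter).
Proof.
elim/ltn_ind: c => c IH.
have [c_lt|c_ge] := ltnP c b; first by rewrite modn_small //; apply: pe_refl.
have E : c = b + (c - b) by rewrite subnKC.
rewrite {1}E nseqD; apply: (pe_trans (pe_rel_ctx [::] _ y_relator)).
by apply: (pe_trans (IH (c - b) _)); [lia | rewrite {2}E modnDl; apply: pe_refl].
Qed.

Lemma pe_yV : pe [:: inv_letter y_letter] (nseq b' y_letter).
Proof.
apply: (pe_trans (pe_sym (pe_rel_ctx [:: inv_letter y_letter] [::] y_relator))).
by rewrite cats0; apply: (pe_cancelV_ctx _ [::] y_letter (nseq b' y_letter)).
Qed.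

Definition normal_word (g : G) : word r.+1 :=
  map x_letter (val g.1) ++ nseq g.2 y_letter.

Definition letter_val (l : letter) : G :=
  if l.2 then ginv (pres_gen l.1) else pres_gen l.1.

Lemma pe_normal_word_x j bb w c :
  pe (x_letter (j, bb) :: normal_word (w, c))
     (normal_word (gmul (letter_val (x_letter (j, bb))) (w, c))).
Proof.
rewrite /letter_val /pres_gen /= liftK free_gen_letter /= /fzp_mul add0r /normal_word /=.
rewrite red_id; last by case: w.
apply: (pe_cat (u := _ :: _)); last exact: pe_refl.
case: (sval w) => [|l' w'] /=; first exact: pe_refl.
case: eqP => [->|_]; last exact: pe_refl.
exact: (pe_cancel_ctx _ [::] (x_letter (j, bb)) (map x_letter w')).
Qed.

Lemma pe_normal_word_y bb w c :
  pe ((y_letter.1, bb) :: normal_word (w, c))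
     (normal_word (gmul (letter_val (y_letter.1, bb)) (w, c))).
Proof.
rewrite /letter_val /pres_gen /= unlift_none.
have -> : (if bb then fzp_inv zp_gen else zp_gen) =
    ((rword_one r, if bb then - inZp 1 else inZp 1)%R : G).
  by case: bb => //; congr (_, _); apply: val_inj.
rewrite /normal_word /fzp_mul /= red_id; last by case: w.
case: bb.
- apply: (pe_trans (pe_cat (u := [:: inv_letter y_letter]) pe_yV (pe_refl _ _))).
  rewrite catA; apply: (pe_trans (pe_cat (pe_ys_xword b' (val w)) (pe_refl _ _))).
  rewrite -catA -nseqD; apply: pe_cat; first exact: pe_refl.
  apply: (pe_trans (pe_ys_mod _)).
  suff -> : (((- inZp 1 : 'I_b)%R : nat) + c) %% b = (b' + c) %% b by apply: pe_refl.
  case: b' c => [|n] c; first by rewrite !modn1.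
  by rewrite /= [1 %% _]modn_small // subn1 modnDml.
- rewrite -cat_cons; apply: (pe_trans (pe_cat (pe_y_xword (val w)) (pe_refl _ _))).
  rewrite -catA /=; apply: pe_cat; first exact: pe_refl.
  by apply: (pe_trans (pe_ys_mod c.+1)); rewrite modnDml add1n; apply: pe_refl.
Qed.

Lemma pe_normal_word u : pe u (normal_word (eval_word pres_gen u)).
Proof.
elim: u => [|l u IH]; first exact: pe_refl.
apply: (pe_trans (pe_cons l IH)); rewrite [eval_word _ _]surjective_pairing.
case: l => i bb; case: (unliftP ord_max i) => [j ->|->].
- exact: (pe_normal_word_x j bb).
- exact: (pe_normal_word_y bb).
Qed.

Lemma eval_x_word w : eval_word pres_gen (map x_letter w) = eval_word free_gen w.
Proof. by elim: w => //= l w ->; rewrite /pres_gen liftK. Qed.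

Lemma eval_y_word c : eval_word pres_gen (nseq c y_letter) = ((rword_one r, (inZp 1 *+ c)%R) : G).
Proof. by elim: c => //= c ->; rewrite /pres_gen unlift_none /= /fzp_mul rword_mul1 mulrS. Qed.

Lemma inZp1_mulrn c : (inZp 1 *+ c)%R = inZp c :> 'I_b.
Proof. by apply: val_inj; rewrite Zp_mulrn /= modnMml mul1n. Qed.

Lemma eval_normal_word g : eval_word pres_gen (normal_word g) = g.
Proof.
case: g => w c; rewrite /normal_word eval_word_cat eval_x_word eval_free_gen eval_y_word.
rewrite /= /fzp_mul add0r inZp1_mulrn rword_ofK rword_mulr1; congr (_, _).
by apply: val_inj; rewrite /= modn_small.
Qed.

Lemma eval_word_pe u v : pe u v -> eval_word pres_gen u = eval_word pres_gen v.
Proof.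
elim=> {u v}.
- by [].
- by move=> u v _ ->.
- by move=> u v w _ -> _ ->.
- by move=> u u' v v' _ Hu _ Hv; rewrite !eval_word_cat Hu Hv.
- by case=> i [] /=; rewrite fzp_mulr1 ?fzp_mulV ?fzp_mulrV.
move=> rel; rewrite inE => /orP [/eqP -> | /mapP [j _ ->]].
  rewrite eval_y_word inZp1_mulrn; congr (_, _).
  by apply: val_inj; rewrite /= modnn.
rewrite /commutator_rel /= /pres_gen liftK unlift_none fzp_mulr1.
set x := free_gen j; set y := zp_gen.
have xVy : fzp_mul y (fzp_inv x) = fzp_mul (fzp_inv x) y.
  by rewrite /fzp_mul rword_mul1 rword_mulr1 addrC.
by rewrite (fzp_mulA y) xVy -fzp_mulA fzp_mulrV fzp_mulr1 fzp_mulrV.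
Qed.

Lemma free_times_Zp_fp : finitely_presented G.
Proof.
exists r.+1, relators, pres_gen; split.
  by move=> g; exists (normal_word g); apply: eval_normal_word.
move=> u v; split; last exact: eval_word_pe.
move=> E; apply: (pe_trans (pe_normal_word u)); rewrite E.
exact: pe_sym (pe_normal_word v).
Qed.

End Presentation.

Lemma has_index_gt0 (G : AbsGroup) (K : G -> Prop) m : has_index K m -> (0 < m)%N.
Proof. by case=> t /(_ (@gone G)) [i _]; case: m i t => [[]|]. Qed.

Lemma free_times_Zp_index_gens r b' (K : free_times_Zp r b' -> Prop) m k :
  subgroup K -> has_index K m -> generated_by_k K k ->
  exists n, (m <= n * b'.+1)%N /\ (n * r + 1 <= k + n)%N.
Proof.
move=> K_sub [t t_transversal] [s [s_in s_gen]].
exists #|fibres t_transversal|; split; first exact: index_le_fibres.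
exact: fibres_schreier_bound s_in s_gen.
Qed.

Section FreeFactor.
Variables (r b' : nat).
Local Notation G := (free_times_Zp r b').

Definition free_factor (g : G) : Prop := g.2 = 0%R.

Lemma free_factor_subgroup : subgroup free_factor.
Proof.
split=> //; split=> [x y | x]; rewrite /free_factor /= => -> //.
  by move=> ->; rewrite addr0.
by rewrite oppr0.
Qed.

Lemma free_factor_index : has_index free_factor b'.+1.
Proof.
exists (fun i => ((rword_one r, i) : G)) => g; exists g.2; split.
  by rewrite /free_factor /= addNr.
by move=> i; rewrite /free_factor /= => /eqP; rewrite addrC subr_eq0 => /eqP.
Qed.

Lemma free_factor_gen : generated_by_k free_factor r.
Proof.
exists (@free_gen r b'); split => // g g0; exists (val g.1).
by rewrite eval_free_gen rword_ofK -g0 -surjective_pairing.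
Qed.

Lemma free_factor_min_gens : min_gens free_factor r.
Proof.
split=> [|j /(free_times_Zp_index_gens free_factor_subgroup free_factor_index)];
  first exact: free_factor_gen.
case=> n [b_le n_bound]; have : (0 < n)%N by case: n b_le {n_bound}.
nia.
Qed.

End FreeFactor.

Local Open Scope ring_scope.

Lemma rat_gt0_num_den (q : rat) :
  0 < q -> exists a b' : nat, (0 < a)%N /\ q = a%:R / b'.+1%:R.
Proof.
move=> q_gt0; set a := `|numq q|%N; set b' := (`|denq q|%N).-1.
have num_nat : numq q = a%:Z by rewrite gtz0_abs // numq_gt0.
have den_nat : denq q = b'.+1%:Z.
  by rewrite prednK ?gtz0_abs ?denq_gt0 // absz_gt0 denq_neq0.
exists a, b'; split; first by rewrite absz_gt0 numq_eq0 lt0r_neq0.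
by rewrite -[q in LHS]divq_num_den num_nat den_nat.
Qed.

Lemma ratio_le_rank_ratio (a b m n k : nat) : (0 < m)%N -> (0 < b)%N ->
  (m <= n * b)%N -> (n * a + 1 <= k)%N -> a%:R / b%:R <= (k%:R - 1) / m%:R :> rat.
Proof.
move=> m_gt0 b_gt0 m_le k_ge; have k_ge1 : (1 <= k)%N by rewrite (leq_trans _ k_ge) ?leq_addl.
rewrite ler_pdivlMr ?ltr0n // mulrAC ler_pdivrMr ?ltr0n // -(natrB _ k_ge1) -!natrM ler_nat.
by rewrite (leq_trans (leq_mul (leqnn a) m_le)) // mulnA leq_mul2r; nia.
Qed.

Theorem proposition2p2 (q : rat) (hq : 0 < q) :
  exists G : AbsGroup, finitely_presented G /\ rank_gradient_is G q.
Proof.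
have [a [b' [a_gt0 ->]]] := rat_gt0_num_den hq.
exists (free_times_Zp a.+1 b'); split; first exact: free_times_Zp_fp.
split=> [K m k K_sub K_index [K_gen _] | eps eps_gt0].
  have [n [m_le k_ge]] := free_times_Zp_index_gens K_sub K_index K_gen.
  apply: (ratio_le_rank_ratio (has_index_gt0 K_index) _ m_le) => //.
  by move: k_ge; rewrite mulnS; lia.
exists (@free_factor a.+1 b'), b'.+1, a.+1; split.
- exact: free_factor_subgroup.
- exact: free_factor_index.
- exact: free_factor_min_gens.
- by rewrite -!pmulrn -[a.+1]addn1 natrD addrK ltrDl.
Qed.
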